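(* For every integer $n\ge 3$, let $M_n$ be the $(n-2)\times(n-2)$ symmetric pentadiagonal matrix with entries \[ (M_n)_{ij}=\begin{cases} 2 & \text{if } i=j=1,\\ 3 & \text{if } i=j=2,\\ 4 & \text{if } i=j \text{ and } 3\le i\le n-2,\\ -1 & \text{if } |i-j|=1 \text{ or } |i-j|=2,\\ 0 & \text{if } |i-j|\ge 3. \end{cases} \] Then $\det M_n = F_{2n-3}$. *)

From mathcomp Require Import all_boot all_order all_algebra.
Set Implicit Arguments. Unset Strict Implicit. Unset Printing Implicit Defensive.
Import Order.TTheory GRing.Theory Num.Theory.
Local Open Scope ring_scope.

Fixpoint fib (n : nat) : nat :=
  match n with
  | 0 => 0
  | 1 => 1
  | (m.+1 as p).+1 => fib p + fib m
  end.

(* Entry (i,j) of M_n, with 1-based indices i j (as in the paper). *)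
Definition Mentry (i j : nat) : int :=
  if i == j then (if i == 1%N then 2 else if i == 2%N then 3 else 4)
  else if (`|(i%:Z - j%:Z)|%N <= 2)%N then -1 else 0.

Definition Mn (n : nat) : 'M[int]_(n - 2) :=
  \matrix_(i < n - 2, j < n - 2) Mentry i.+1 j.+1.

From mathcomp Require Import all_boot all_order all_algebra.
From mathcomp Require Import zify ring.
Set Implicit Arguments. Unset Strict Implicit. Unset Printing Implicit Defensive.
Import Order.TTheory GRing.Theory Num.Theory.
Local Open Scope ring_scope.

(* Proof idea: Gaussian elimination of the first row and column.
   Let [band x y z s] be the s x s symmetric pentadiagonal matrix with diagonal
   (x, z, 4, 4, ...), entry y in position (1,2), and -1 elsewhere in the band
   |i - j| <= 2.  Its Schur complement with respect to the pivot x is again of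
   this shape, [band (z - y^2/x) (y/x - 1) (4 - 1/x) (s - 1)], so the
   determinant factors as x times the determinant of a smaller band matrix.
   Writing the parameters as ((a+b)/a, -b/a, (2a+b)/a), one elimination step
   is the substitution (a, b) -> (a+b, a+2b), and the pivot is (a+b)/a; hence
   the product of the pivots telescopes.  Starting from (a, b) = (1, 1), i.e.
   from M_n itself, the pairs are consecutive Fibonacci numbers
   (F_{2k+1}, F_{2k+2}), and the determinant of M_n, a matrix of size n-2,
   is F_{2(n-2)+1} = F_{2n-3}.  The computation is carried out in any
   number field (all pivots are then nonzero) and transported back to int. *)

Lemma det_schur1 (R : comUnitRingType) s (A : 'M[R]_(1 + s)) :
  A 0 0 \is a GRing.unit ->
  \det A = A 0 0 * \det (drsubmx A - (A 0 0)^-1 *: (dlsubmx A *m ursubmx A)).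
Proof.
move=> unit_pivot; set S := drsubmx A - _.
have pivotE : ulsubmx A = (A 0 0)%:M.
  by apply/matrixP => i j; rewrite !mxE (ord1 i) (ord1 j); congr (A _ _); exact/val_inj.
have factorA : A = block_mx 1%:M 0 ((A 0 0)^-1 *: dlsubmx A) 1%:M *m
                   block_mx (ulsubmx A) (ursubmx A) 0 S.
  rewrite mulmx_block !mul1mx !mul0mx ?addr0 ?add0r pivotE.
  rewrite -scalemxAl mul_mx_scalar scalerA mulVr // scale1r.
  by rewrite /S -scalemxAl addrC subrK -pivotE submxK.
rewrite {1}factorA det_mulmx det_lblock det_ublock !det1 pivotE.
by rewrite !mul1r det_scalar1.
Qed.

Section BandMatrices.
Variable F : fieldType.

Definition band_entry (x y z : F) (i j : nat) : F :=
  if i == j then (if i == 0%N then x else if i == 1%N then z else 4)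
  else if (i + j == 1)%N then y
  else if (i <= j + 2)%N && (j <= i + 2)%N then -1 else 0.

Definition band (x y z : F) s : 'M[F]_s :=
  \matrix_(i < s, j < s) band_entry x y z i j.

(* Eliminating the pivot x of a band matrix yields a band matrix: the band
   structure only lets the first row interact with rows 1 and 2. *)
Lemma band_schur x y z s :
  let A := band x y z (1 + s) in
  drsubmx A - x^-1 *: (dlsubmx A *m ursubmx A)
  = band (z - y ^+ 2 / x) (y / x - 1) (4 - 1 / x) s.
Proof.
apply/matrixP => -[i lt_i] [j lt_j]; rewrite !mxE big_ord1 !mxE /band_entry /=.
case: i lt_i => [|[|i]] _; case: j lt_j => [|[|j]] _ //=.
all: rewrite ?addn0 ?addnS ?addSn ?eqSS ?ltnS /= ?mulr0 ?mul0r ?subr0 //; ring.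
Qed.

Lemma det_band_cons x y z s : x != 0 ->
  \det (band x y z (1 + s)) = x * \det (band (z - y ^+ 2 / x) (y / x - 1) (4 - 1 / x) s).
Proof.
move=> x_neq0; have pivot_entry : band x y z (1 + s) 0 0 = x by rewrite mxE.
by rewrite det_schur1 pivot_entry ?unitfE // band_schur.
Qed.

Definition pair_band (a b : F) s : 'M[F]_s :=
  band ((a + b) / a) (- b / a) ((2 * a + b) / a) s.

Lemma det_pair_band_cons a b s : a != 0 -> a + b != 0 ->
  \det (pair_band a b s.+1) = (a + b) / a * \det (pair_band (a + b) (a + 2 * b) s).
Proof.
move=> a_neq0 ab_neq0; rewrite /pair_band -add1n det_band_cons; last first.
  by rewrite mulf_neq0 ?invr_eq0.
congr (_ * \det (band _ _ _ _)); field; exact/andP.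
Qed.

End BandMatrices.

Lemma fibSS m : fib m.+2 = (fib m.+1 + fib m)%N.
Proof. by []. Qed.

Lemma fib_pair_step m :
  (fib m.+1 + fib m.+2 = fib m.+3)%N /\ (fib m.+1 + 2 * fib m.+2 = fib m.+4)%N.
Proof. by rewrite !fibSS; split; lia. Qed.

(* Only F_0 vanishes; this makes every pivot of the elimination nonzero. *)
Lemma fib_succ_gt0 m : (0 < fib m.+1)%N.
Proof. by elim: m => [|m IH] //; rewrite fibSS addn_gt0 IH. Qed.

Lemma det_pair_band_fib (R : numFieldType) s k :
  \det (pair_band (fib (k.*2).+1)%:R (fib (k.*2).+2)%:R s : 'M[R]_s)
  = (fib (s + k).*2.+1)%:R / (fib (k.*2).+1)%:R.
Proof.
have nz m : (fib m.+1)%:R != 0 :> R by rewrite pnatr_eq0 -lt0n fib_succ_gt0.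
elim: s k => [|s IH] k; first by rewrite det_mx00 divff.
have [fib_odd fib_even] := fib_pair_step k.*2.
have next_a : (fib k.*2.+1)%:R + (fib k.*2.+2)%:R = (fib (k.+1).*2.+1)%:R :> R.
  by rewrite -natrD fib_odd doubleS.
have next_b : (fib k.*2.+1)%:R + 2 * (fib k.*2.+2)%:R = (fib (k.+1).*2.+2)%:R :> R.
  by rewrite doubleS -fib_even natrD natrM.
rewrite det_pair_band_cons ?nz ?next_a ?nz // next_b IH addnS -addSn.
by rewrite mulrC mulrA divfK ?nz.
Qed.

Lemma Mn_pair_band (R : numFieldType) n :
  map_mx intr (Mn n) = pair_band (1 : R) 1 (n - 2).
Proof.
apply/matrixP => i j; rewrite !mxE /Mentry /band_entry /= !divr1.
have band_dist : (`|i.+1%:Z - j.+1%:Z|%N <= 2)%N = (i <= j + 2)%N && (j <= i + 2)%N.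
  by apply/idP/andP => [h|[]]; [split|]; lia.
rewrite eqSS band_dist; case: eqP => [/val_inj ->|_].
  by case: (nat_of_ord j) => [|[|k]] /=; ring.
case: ifP => [_|far_ij]; first by case: ifP.
by rewrite ifN //; apply: contraFneq far_ij => sum1; lia.
Qed.

Theorem mainTheorem1 (n : nat) (hn : (3 <= n)%N) :
  \det (Mn n) = (fib (2 * n - 3))%:Z.
Proof.
apply: (@intr_inj rat).
rewrite -det_map_mx Mn_pair_band (det_pair_band_fib rat (n - 2) 0) addn0 divr1.
have -> : (2 * n - 3 = (n - 2).*2.+1)%N by lia.
by rewrite pmulrn.
Qed.
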